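(* For every positive integer $N$, there exists an equal norm tight integer frame in $\mathcal{H}_3$ with $3N$ elements, and there exists an equal norm tight integer frame in $\mathcal{H}_3$ with $4N$ elements.
   Context: $\mathcal{H}_M$ is the real $M$-dimensional Hilbert space, identified with $\mathbb{R}^M$ via a fixed orthonormal basis. An equal norm tight integer frame (ENTIF) with $N$ elements in $\mathcal{H}_M$ is an $M\times N$ integer matrix $A$ of rank $M$ with $AA^T=\lambda I_M$ for some $\lambda>0$ and all columns of the same Euclidean norm. *)

From mathcomp Require Import all_boot all_order all_algebra.
Set Implicit Arguments. Unset Strict Implicit. Unset Printing Implicit Defensive.
Import Order.TTheory GRing.Theory Num.Theory.
Local Open Scope ring_scope.

Definition col_sqnorm (M N : nat) (A : 'M[int]_(M, N)) (j : 'I_N) : int :=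
  \sum_(i < M) A i j ^+ 2.

(* Equal norm tight integer frame with N elements in H_M (identified with R^M):
   an M x N integer matrix of rank M with A A^T = lambda I_M for some lambda > 0
   and all columns of the same Euclidean norm.  Rank is computed over rat
   (equal to the real rank, as rank is field-independent for rational matrices). *)
Definition ENTIF (M N : nat) (A : 'M[int]_(M, N)) : Prop :=
  [/\ \rank (map_mx (fun z : int => z%:~R : rat) A) = M,
      (exists2 lambda : int, 0 < lambda & A *m A^T = lambda%:M)
    & forall j k : 'I_N, col_sqnorm A j = col_sqnorm A k].

From mathcomp Require Import all_boot all_order all_algebra.
Set Implicit Arguments. Unset Strict Implicit. Unset Printing Implicit Defensive.
Import GRing.Theory Num.Theory.
Local Open Scope ring_scope.

(* Repeating the columns of an ENTIF N times gives an ENTIF, since the frame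
   operator just gets multiplied by N.  It therefore suffices to exhibit one
   ENTIF with 3 and one with 4 elements in H_3: the standard basis and the
   four vertices (+-1, +-1, +-1) of a regular tetrahedron. *)

Lemma mxrank_map_intr_tight (M N : nat) (A : 'M[int]_(M, N)) (l : int) :
  l != 0 -> A *m A^T = l%:M ->
  \rank (map_mx (fun z : int => z%:~R : rat) A) = M.
Proof.
move=> l_neq0 tightA; set f := fun z : int => z%:~R : rat.
have AAt : map_mx f A *m (map_mx f A)^T = (f l)%:M.
  by rewrite map_trmx -map_mxM tightA map_scalar_mx.
apply/eqP; rewrite eqn_leq rank_leq_row -{1}(mxrank1 rat M).
have fl_neq0 : f l != 0 by rewrite intr_eq0.
rewrite -(mxrank_scale_nz 1%:M fl_neq0) scalemx1 -AAt.
exact: mxrankM_maxl.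
Qed.

Lemma ENTIF_tight (M N : nat) (A : 'M[int]_(M, N)) (l : int) :
  0 < l -> A *m A^T = l%:M ->
  (forall j k, col_sqnorm A j = col_sqnorm A k) -> ENTIF A.
Proof.
move=> l_gt0 tightA eq_norms; split=> //; last by exists l.
exact: (mxrank_map_intr_tight (lt0r_neq0 l_gt0) tightA).
Qed.

Lemma sum_ord_modn (V : nmodType) (k N : nat) (F : nat -> V) : (0 < k)%N ->
  \sum_(j < k * N) F (j %% k)%N = (\sum_(r < k) F r) *+ N.
Proof.
move=> k_gt0; rewrite -(big_mkord xpredT (fun j => F (j %% k)%N)).
elim: N => [|N IHN]; first by rewrite muln0 big_geq.
rewrite mulnS addnC (big_cat_nat _ (leq_addr _ _)) //= IHN mulrS addrC.
congr (_ + _); rewrite -{1}(add0n (k * N)%N) big_addn addKn big_mkord.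
by apply: eq_bigr => r _; rewrite addnC mulnC modnMDl modn_small.
Qed.

Definition repeat_cols (R : Type) (M k N : nat) (B : 'M[R]_(M, k.+1)) :
  'M[R]_(M, k.+1 * N) := \matrix_(i, j) B i (inord (j %% k.+1)).

Lemma mul_repeat_cols_tr (R : comNzRingType) (M k N : nat)
    (B : 'M[R]_(M, k.+1)) :
  repeat_cols N B *m (repeat_cols N B)^T = (B *m B^T) *+ N.
Proof.
apply/matrixP => i i'; rewrite mxE mulmxnE !mxE.
under eq_bigr do rewrite !mxE.
rewrite (@sum_ord_modn _ k.+1 N (fun r => B i (inord r) * B i' (inord r))) //.
by congr (_ *+ _); apply: eq_bigr => r _; rewrite !mxE inord_val.
Qed.

Lemma ENTIF_repeat_cols (M k N : nat) (B : 'M[int]_(M, k.+1)) :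
  (0 < N)%N -> ENTIF B -> ENTIF (repeat_cols N B).
Proof.
move=> N_gt0 [_ [l l_gt0 tightB] eq_norms].
apply: (@ENTIF_tight _ _ _ (l *+ N)).
- by rewrite mulrn_wgt0.
- by rewrite mul_repeat_cols_tr tightB raddfMn.
move=> j j'; rewrite /col_sqnorm.
under eq_bigr do rewrite mxE.
by under [RHS]eq_bigr do rewrite mxE; apply: eq_norms.
Qed.

Lemma ENTIF_1 (n : nat) : ENTIF (1%:M : 'M[int]_n).
Proof.
apply: (@ENTIF_tight _ _ _ 1) => //; first by rewrite trmx1 mul1mx.
suff norm1 j : col_sqnorm (1%:M : 'M[int]_n) j = 1 by move=> j k; rewrite !norm1.
rewrite /col_sqnorm (bigD1 j) //= big1 => [|i /negPf neq_ij]; rewrite !mxE.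
  by rewrite eqxx expr1n addr0.
by rewrite neq_ij expr0n.
Qed.

Definition tetrahedron_mx : 'M[int]_(3, 4) := \matrix_(i < 3, j < 4)
  (if (i == j :> nat) || (j == 3%N :> nat) then 1 else -1).

Lemma ENTIF_tetrahedron : ENTIF tetrahedron_mx.
Proof.
apply: (@ENTIF_tight _ _ _ 4) => //.
  apply/matrixP => i j; rewrite !mxE !big_ord_recr !big_ord0 /= !mxE.
  by case: i => [[|[|[|?]]] ?]; case: j => [[|[|[|?]]] ?].
move=> j k; rewrite /col_sqnorm !big_ord_recr !big_ord0 /= !mxE.
by case: j => [[|[|[|[|?]]]] ?]; case: k => [[|[|[|[|?]]]] ?].
Qed.

Theorem theorem4p9 (N : nat) : (0 < N)%N ->
  (exists A : 'M[int]_(3, 3 * N), ENTIF A) /\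
  (exists A : 'M[int]_(3, 4 * N), ENTIF A).
Proof.
move=> N_gt0; split.
- exists (repeat_cols N 1%:M); exact: ENTIF_repeat_cols (ENTIF_1 3).
- exists (repeat_cols N tetrahedron_mx); exact: ENTIF_repeat_cols ENTIF_tetrahedron.
Qed.
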